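(* Every $LS$-sequence of points $(\xi_{L,S}^n)_{n\in\mathbb{N}}$ does not have Poissonian pair correlations.
   Context: $\|x\|$ denotes the distance from $x$ to the nearest integer. A sequence $(x_n)_{n\in\mathbb{N}}$ in $[0,1)$ has Poissonian pair correlations if for every $s \geq 0$, $F_N(s) := \frac{1}{N}\#\{1 \leq l \neq m \leq N : \|x_l - x_m\| \leq s/N\} \to 2s$ as $N\to\infty$. $LS$-sequences: Let $L\in\mathbb{N}$, $S\in\mathbb{N}_0$ with $L+S\ge 2$, and let $\beta\in(0,1)$ be the solution of $L\beta+S\beta^2=1$. Let $\rho_{L,S}$ be the partition of $[0,1)$ into $L+S$ consecutive intervals, the first $L$ of length $\beta$ and the following $S$ of length $\beta^2$. For a partition $\pi$ of $[0,1)$, its $\rho$-refinement $\rho\pi$ is obtained by subdividing every interval of maximal length of $\pi$ positively homothetically to $\rho$. The $LS$-sequence of partitions is $(\rho_{L,S}^n\pi)_{n\in\mathbb{N}}$ with $\pi=\{[0,1)\}$; the partition $\rho_{L,S}^n\pi$ consists of $t_n$ intervals, of which $l_n$ have the maximal length $\beta^n$ (the rest have length $\beta^{n+1}$). The $LS$-sequence of points is defined as follows: $\Lambda^1_{L,S}$ is the list of the $t_1$ left endpoints of $\rho_{L,S}\pi$ ordered by magnitude. Given $\Lambda^n_{L,S}=\{\xi^1_{L,S},\ldots,\xi^{t_n}_{L,S}\}$ (ordered), the ordered list $\Lambda^{n+1}_{L,S}$ is $\xi^1,\ldots,\xi^{t_n}$, followed by $\psi^{n+1}_{1,0}(\xi^1),\ldots,\psi^{n+1}_{1,0}(\xi^{l_n}),\ldots,\psi^{n+1}_{L,0}(\xi^1),\ldots,\psi^{n+1}_{L,0}(\xi^{l_n})$,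 followed by $\psi^{n+1}_{L,1}(\xi^1),\ldots,\psi^{n+1}_{L,1}(\xi^{l_n}),\ldots,\psi^{n+1}_{L,S-1}(\xi^1),\ldots,\psi^{n+1}_{L,S-1}(\xi^{l_n})$, where $\psi^n_{i,j}(x)=x+i\beta^n+j\beta^{n+1}$. The $LS$-sequence of points $(\xi^n_{L,S})_{n\in\mathbb{N}}$ is the sequence whose first $t_n$ terms are $\Lambda^n_{L,S}$ for every $n$. (For $S=0$, $L=b$ one obtains the van der Corput sequence in base $b$.) *)

From Stdlib Require Import Reals List Arith Lia Lra.
Import ListNotations.
Open Scope R_scope.

Definition dist_int (x : R) : R := Rmin (frac_part x) (1 - frac_part x).

(* F_N(s) = (1/N) #{ (l,m) in [1..N]^2 : l <> m, ||x_l - x_m|| <= s/N },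
   with the sequence indexed from 0 here (x 0 is the first term). *)
Definition pair_count (x : nat -> R) (N : nat) (s : R) : nat :=
  length (filter
    (fun p : nat * nat =>
       if Nat.eq_dec (fst p) (snd p) then false
       else if Rle_dec (dist_int (x (fst p) - x (snd p))) (s / INR N)
            then true else false)
    (list_prod (seq 0 N) (seq 0 N))).

Definition F_pc (x : nat -> R) (N : nat) (s : R) : R :=
  INR (pair_count x N s) / INR N.

Definition poissonian_pair_correlations (x : nat -> R) : Prop :=
  forall s : R, 0 <= s -> Un_cv (fun N => F_pc x N s) (2 * s).

(* (t_n, l_n): number of intervals of rho^n pi and number of those of
   maximal length; t_0 = l_0 = 1 (pi = {[0,1)}). *)
Fixpoint ls_tl (L S : nat) (n : nat) : nat * nat :=
  match n with
  | O => (1%nat, 1%nat)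
  | Datatypes.S n' =>
      let '(t, l) := ls_tl L S n' in
      (t + (L + S - 1) * l, (L - 1) * l + t)%nat
  end.

Definition ls_t L S n := fst (ls_tl L S n).
Definition ls_l L S n := snd (ls_tl L S n).

(* the k-th new translation (k = 1 .. L+S-1) at stage m:
   psi^m_{k,0} for k < L, and psi^m_{L,k-L} for L <= k. *)
Definition ls_shift (L : nat) (beta : R) (m k : nat) : R :=
  if Nat.ltb k L then INR k * beta ^ m
  else INR L * beta ^ m + INR (k - L) * beta ^ (m + 1).

(* Lambda^n as an ordered list; Lambda^0 = [0], and Lambda^1 is then the
   list of left endpoints of rho_{L,S} pi ordered by magnitude. *)
Fixpoint ls_Lambda (L S : nat) (beta : R) (n : nat) : list R :=
  match n with
  | O => [0]
  | Datatypes.S n' =>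
      let prev := ls_Lambda L S beta n' in
      let firsts := firstn (ls_l L S n') prev in
      prev ++ flat_map (fun k => map (fun x => x + ls_shift L beta n k) firsts)
                       (seq 1 (L + S - 1))
  end.

(* The LS-sequence of points: the k-th term (0-indexed) is the k-th entry
   of Lambda^k (which has t_k >= k+1 entries; the Lambda^n are nested). *)
Definition ls_seq (L S : nat) (beta : R) (k : nat) : R :=
  nth k (ls_Lambda L S beta k) 0.

From Stdlib Require Import Reals List Arith Lia Lra Classical.
Import ListNotations.
Open Scope R_scope.

(* The first [t_n] points of an LS-sequence are the left endpoints of the [t_n]
   intervals of the partition [rho^n pi], which are pairwise disjoint, lie in
   [[0,1)] and have length at least [beta^(n+1)]; so any two of these points are
   at distance at least [beta^(n+1)] on the circle.  The [l_n] long and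
   [t_n - l_n] short intervals tile [[0,1)], whence [t_n beta^n >= 1].  For
   [s = beta/2] the window [s/t_n] is therefore smaller than every gap, so
   [F_(t_n)(s) = 0] for all [n], whereas Poissonian pair correlations would force
   [F_N(s) -> beta]. *)

Lemma in_firstn {A} n (l : list A) x : In x (firstn n l) -> In x l.
Proof. intros Hx. rewrite <- (firstn_skipn n l). apply in_or_app. now left. Qed.

Lemma NoDup_firstn {A} n (l : list A) : NoDup l -> NoDup (firstn n l).
Proof.
  intros Hl. rewrite <- (firstn_skipn n l) in Hl. exact (NoDup_app_remove_r _ _ Hl).
Qed.

Lemma list_prod_app {A B} (ks ks' : list A) (l : list B) :
  list_prod (ks ++ ks') l = list_prod ks l ++ list_prod ks' l.
Proof.
  induction ks as [|k ks IH]; [reflexivity|]. cbn. now rewrite IH, app_assoc.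
Qed.

Lemma NoDup_list_prod {A B} (ks : list A) (l : list B) :
  NoDup ks -> NoDup l -> NoDup (list_prod ks l).
Proof.
  intros Hks Hl. induction Hks as [|k ks Hk Hks IH]; cbn; [constructor|].
  apply NoDup_app; [|exact IH|].
  - apply NoDup_map_NoDup_ForallPairs; [|exact Hl].
    intros x y _ _ E. now injection E.
  - intros p Hp Hp'. apply in_map_iff in Hp as (x & <- & _).
    apply in_prod_iff in Hp' as [Hk' _]. contradiction.
Qed.

Lemma NoDup_app_list_prod {A B} (ks ks' : list A) (l l' : list B) :
  NoDup ks -> NoDup ks' -> (forall k, In k ks -> ~ In k ks') -> NoDup l -> NoDup l' ->
  NoDup (list_prod ks l ++ list_prod ks' l').
Proof.
  intros Hks Hks' Hdisj Hl Hl'.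
  apply NoDup_app; [now apply NoDup_list_prod | now apply NoDup_list_prod |].
  intros [k x] Hp Hp'. apply in_prod_iff in Hp as [Hk _], Hp' as [Hk' _].
  exact (Hdisj k Hk Hk').
Qed.

Lemma INR_add_1_le a b : (a < b)%nat -> INR a + 1 <= INR b.
Proof. intros Hab. rewrite <- S_INR. apply le_INR. exact Hab. Qed.

Lemma dist_int_ge d y : 0 < d -> d <= Rabs y <= 1 - d -> d <= dist_int y.
Proof.
  intros Hd Hy. unfold dist_int, frac_part, Int_part.
  destruct (Rcase_abs y) as [Hneg|Hpos].
  - rewrite Rabs_left in Hy by exact Hneg.
    rewrite <- (tech_up y 0) by (simpl; lra). simpl.
    unfold Rmin. destruct (Rle_dec _ _); lra.
  - rewrite Rabs_right in Hy by exact Hpos.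
    rewrite <- (tech_up y 1) by (simpl; lra). simpl.
    unfold Rmin. destruct (Rle_dec _ _); lra.
Qed.

(* The pair [(a, h)] stands for the interval [[a, a + h)]. *)
Definition disjoint (u v : R * R) : Prop :=
  fst u + snd u <= fst v \/ fst v + snd v <= fst u.

Definition within (u a : R * R) : Prop :=
  fst a <= fst u /\ fst u + snd u <= fst a + snd a.

Lemma disjoint_irrefl u : 0 < snd u -> ~ disjoint u u.
Proof. unfold disjoint; lra. Qed.

Lemma disjoint_within a b u v : disjoint a b -> within u a -> within v b -> disjoint u v.
Proof. unfold disjoint, within; lra. Qed.

Lemma within_trans u a b : within u a -> within a b -> within u b.
Proof. unfold within; lra. Qed.

Lemma dist_int_disjoint d u v : 0 < d ->
  within u (0, 1) -> within v (0, 1) -> d <= snd u -> d <= snd v ->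
  disjoint u v -> d <= dist_int (fst u - fst v).
Proof.
  unfold within, disjoint; simpl; intros Hd Hu Hv Hdu Hdv Huv.
  apply dist_int_ge; [exact Hd|].
  destruct Huv; [rewrite Rabs_left1 | rewrite Rabs_right]; lra.
Qed.

Lemma pair_count_eq_0 x N s :
  (forall i j, (i < N)%nat -> (j < N)%nat -> i <> j -> s / INR N < dist_int (x i - x j)) ->
  pair_count x N s = 0%nat.
Proof.
  intros Hfar. unfold pair_count.
  destruct (filter _ _) as [|[i j] ps] eqn:E; [reflexivity|].
  assert (Hin : In (i, j) (filter _ (list_prod (seq 0 N) (seq 0 N))))
    by (rewrite E; left; reflexivity).
  apply filter_In in Hin as [Hij Hkeep].
  apply in_prod_iff in Hij as [Hi Hj]. apply in_seq in Hi, Hj. cbn [fst snd] in Hkeep.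
  destruct (Nat.eq_dec i j) as [|Hne]; [discriminate|].
  destruct (Rle_dec _ _) as [Hle|]; [|discriminate].
  specialize (Hfar i j ltac:(lia) ltac:(lia) Hne). lra.
Qed.

Lemma not_poissonian_of_F_pc_eq_0 x s : 0 < s ->
  (forall N0, exists N, (N0 <= N)%nat /\ F_pc x N s = 0) ->
  ~ poissonian_pair_correlations x.
Proof.
  intros Hs Hzero Hpc.
  destruct (Hpc s (Rlt_le _ _ Hs) (2 * s) ltac:(lra)) as [N0 HN0].
  destruct (Hzero N0) as (N & HN & HF).
  specialize (HN0 N HN). rewrite HF in HN0. unfold R_dist in HN0.
  rewrite Rabs_left in HN0; lra.
Qed.

Section LS.

Variables (L S : nat) (beta : R).
Hypothesis HL : (1 <= L)%nat.
Hypothesis HLS : (2 <= L + S)%nat.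
Hypothesis Hbeta : 0 < beta < 1.
Hypothesis Hchar : INR L * beta + INR S * beta ^ 2 = 1.

Lemma ls_t_succ n : ls_t L S (Datatypes.S n) = (ls_t L S n + (L + S - 1) * ls_l L S n)%nat.
Proof. unfold ls_t, ls_l; cbn; destruct (ls_tl L S n); reflexivity. Qed.

Lemma ls_l_succ n : ls_l L S (Datatypes.S n) = ((L - 1) * ls_l L S n + ls_t L S n)%nat.
Proof. unfold ls_t, ls_l; cbn; destruct (ls_tl L S n); reflexivity. Qed.

Lemma ls_counts n : (1 <= ls_l L S n <= ls_t L S n /\ n + 1 <= ls_t L S n)%nat.
Proof.
  induction n as [|n IH]; [cbv; lia|].
  rewrite ls_t_succ, ls_l_succ. nia.
Qed.

Lemma ls_lengths_sum n :
  INR (ls_l L S n) * beta ^ n + (INR (ls_t L S n) - INR (ls_l L S n)) * beta ^ (n + 1) = 1.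
Proof.
  induction n as [|n IH]; [cbv; ring|].
  rewrite ls_t_succ, ls_l_succ, !plus_INR, !mult_INR, !minus_INR by lia.
  rewrite <- IH.
  set (l := INR (ls_l L S n)); set (t := INR (ls_t L S n)).
  transitivity (l * beta ^ n + (t - l) * beta ^ (n + 1)
                + l * beta ^ n * (INR L * beta + INR S * beta ^ 2 - 1)).
  - simpl pow. rewrite pow_add, !plus_INR. simpl. ring.
  - rewrite Hchar. ring.
Qed.

Lemma ls_t_pow_ge_1 n : 1 <= INR (ls_t L S n) * beta ^ n.
Proof.
  rewrite <- (ls_lengths_sum n).
  destruct (ls_counts n) as [[_ Hlt] _]. apply le_INR in Hlt.
  assert (0 <= beta ^ (n + 1) <= beta ^ n).
  { rewrite pow_add. pose proof (pow_le beta n ltac:(lra)). simpl. nra. }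
  nra.
Qed.

Definition ls_piece_length (m k : nat) : R :=
  if Nat.ltb k L then beta ^ m else beta ^ (m + 1).

(* [(k, a)] is the [k]-th subinterval of [a] in the refinement at stage [m].
   Intervals that are not refined are carried over as their own piece [k = 0]. *)
Definition ls_piece (m : nat) (p : nat * (R * R)) : R * R :=
  (fst (snd p) + ls_shift L beta m (fst p), ls_piece_length m (fst p)).

Lemma ls_shift_0 m : ls_shift L beta m 0 = 0.
Proof. unfold ls_shift. destruct (Nat.ltb_spec 0 L); [simpl; ring | lia]. Qed.

Lemma ls_piece_length_ge m k : beta ^ (m + 1) <= ls_piece_length m k.
Proof.
  unfold ls_piece_length. destruct (Nat.ltb k L); [|lra].
  rewrite pow_add. pose proof (pow_le beta m ltac:(lra)). simpl. nra.
Qed.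

Lemma ls_piece_length_pos m k : 0 < ls_piece_length m k.
Proof. apply (Rlt_le_trans _ (beta ^ (m + 1))); [apply pow_lt; lra | apply ls_piece_length_ge]. Qed.

Lemma ls_pieces_ordered m k k' : (k < k')%nat ->
  ls_shift L beta m k + ls_piece_length m k <= ls_shift L beta m k'.
Proof.
  intros Hk. unfold ls_shift, ls_piece_length.
  pose proof (pow_le beta m ltac:(lra)). pose proof (pow_le beta (m + 1) ltac:(lra)).
  destruct (Nat.ltb_spec k L), (Nat.ltb_spec k' L); try lia.
  - pose proof (INR_add_1_le k k' Hk). nra.
  - pose proof (INR_add_1_le k L ltac:(lia)). pose proof (pos_INR (k' - L)). nra.
  - pose proof (INR_add_1_le (k - L) (k' - L) ltac:(lia)). nra.
Qed.

Lemma ls_pieces_fit n k : (k < L + S)%nat ->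
  0 <= ls_shift L beta (Datatypes.S n) k /\
  ls_shift L beta (Datatypes.S n) k + ls_piece_length (Datatypes.S n) k <= beta ^ n.
Proof.
  intros Hk. unfold ls_shift, ls_piece_length.
  replace (Datatypes.S n + 1)%nat with (Datatypes.S (Datatypes.S n)) by lia.
  rewrite <- (Rmult_1_r (beta ^ n)), <- Hchar. simpl pow.
  pose proof (pow_le beta n ltac:(lra)).
  pose proof (pos_INR L). pose proof (pos_INR S).
  assert (0 <= beta * beta ^ n) by nra. assert (0 <= beta * (beta * beta ^ n)) by nra.
  destruct (Nat.ltb_spec k L).
  - pose proof (pos_INR k).
    assert ((INR k + 1) * (beta * beta ^ n) <= INR L * (beta * beta ^ n))
      by (apply Rmult_le_compat_r; [lra | apply INR_add_1_le; lia]).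
    split; nra.
  - pose proof (pos_INR (k - L)).
    assert ((INR (k - L) + 1) * (beta * (beta * beta ^ n)) <= INR S * (beta * (beta * beta ^ n)))
      by (apply Rmult_le_compat_r; [lra | apply INR_add_1_le; lia]).
    split; nra.
Qed.

Definition ls_children (n : nat) (I : list (R * R)) : list (nat * (R * R)) :=
  list_prod [0%nat] I ++ list_prod (seq 1 (L + S - 1)) (firstn (ls_l L S n) I).

Fixpoint ls_intervals (n : nat) : list (R * R) :=
  match n with
  | O => [(0, 1)]
  | Datatypes.S m => map (ls_piece n) (ls_children m (ls_intervals m))
  end.

Lemma map_fst_ls_intervals n : map fst (ls_intervals n) = ls_Lambda L S beta n.
Proof.
  induction n as [|n IH]; [reflexivity|].
  cbn [ls_intervals ls_Lambda]. unfold ls_children.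
  rewrite map_map, map_app, <- IH, firstn_map. f_equal.
  - cbn [list_prod]. rewrite app_nil_r, map_map.
    apply map_ext. intros a. unfold ls_piece; cbn [fst snd]. rewrite ls_shift_0. ring.
  - induction (seq 1 (L + S - 1)) as [|k ks IHks]; [reflexivity|].
    cbn [list_prod flat_map]. rewrite map_app, IHks, !map_map. reflexivity.
Qed.

Lemma length_ls_intervals n : length (ls_intervals n) = ls_t L S n.
Proof.
  induction n as [|n IH]; [reflexivity|].
  cbn [ls_intervals]. unfold ls_children.
  rewrite length_map, length_app, !length_prod, length_firstn, length_seq, IH, ls_t_succ.
  destruct (ls_counts n) as [[_ Hlt] _]. rewrite Nat.min_l by exact Hlt. cbn [length]. lia.
Qed.

Lemma in_ls_children n I p : In p (ls_children n I) ->
  In (snd p) I /\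
  (fst p = 0%nat \/ (1 <= fst p < L + S)%nat /\ In (snd p) (firstn (ls_l L S n) I)).
Proof.
  destruct p as [k a]. unfold ls_children. cbn [fst snd].
  intros [Hp | Hp]%in_app_or; apply in_prod_iff in Hp as [Hk Ha].
  - destruct Hk as [<- | []]. auto.
  - apply in_seq in Hk. split; [exact (in_firstn _ _ _ Ha) | right; split; [lia | exact Ha]].
Qed.

Lemma ls_children_NoDup n I : NoDup I -> NoDup (ls_children n I).
Proof.
  intros HI. apply NoDup_app_list_prod; try apply seq_NoDup.
  - repeat constructor. easy.
  - intros k [<- | []] Hk. apply in_seq in Hk. lia.
  - exact HI.
  - exact (NoDup_firstn _ _ HI).
Qed.

Lemma ls_intervals_long n u :
  In u (firstn (ls_l L S n) (ls_intervals n)) -> snd u = beta ^ n.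
Proof.
  destruct n as [|n]; [intros [<- | []]; reflexivity|].
  cbn [ls_intervals]. unfold ls_children.
  replace (L + S - 1)%nat with (L - 1 + S)%nat by lia.
  rewrite seq_app, list_prod_app, app_assoc, firstn_map.
  set (X := list_prod [0%nat] _ ++ list_prod (seq 1 (L - 1)) _).
  replace (ls_l L S (Datatypes.S n)) with (length X + 0)%nat.
  2:{ unfold X. rewrite length_app, !length_prod, length_firstn, length_seq,
        length_ls_intervals, ls_l_succ.
      destruct (ls_counts n) as [[_ Hlt] _]. rewrite Nat.min_l by exact Hlt. cbn [length]. lia. }
  rewrite firstn_app_2, app_nil_r.
  intros (p & <- & Hp)%in_map_iff.
  assert (Hk : (fst p < L)%nat).
  { destruct p as [k a]. apply in_app_or in Hp as [Hp | Hp];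
      apply in_prod_iff in Hp as [Hk _]; cbn [fst].
    - destruct Hk as [<- | []]. lia.
    - apply in_seq in Hk. lia. }
  unfold ls_piece, ls_piece_length. cbn [snd].
  now destruct (Nat.ltb_spec (fst p) L); [|lia].
Qed.

Lemma ls_piece_within n p :
  (forall u, In u (ls_intervals n) -> beta ^ (n + 1) <= snd u) ->
  In p (ls_children n (ls_intervals n)) -> within (ls_piece (Datatypes.S n) p) (snd p).
Proof.
  intros Hshort Hp. destruct (in_ls_children _ _ _ Hp) as [Ha [Hk | [Hk Hlong]]];
    destruct p as [k a]; cbn [fst snd] in *; unfold within, ls_piece; cbn [fst snd].
  - subst k. rewrite ls_shift_0. unfold ls_piece_length.
    destruct (Nat.ltb_spec 0 L); [|lia].
    specialize (Hshort a Ha). rewrite Nat.add_1_r in Hshort. lra.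
  - rewrite (ls_intervals_long n a Hlong). destruct (ls_pieces_fit n k ltac:(lia)). lra.
Qed.

Lemma ls_intervals_bounds n u :
  In u (ls_intervals n) -> within u (0, 1) /\ beta ^ (n + 1) <= snd u.
Proof.
  revert u. induction n as [|n IH]; intros u Hu.
  - destruct Hu as [<- | []]. unfold within; cbn. lra.
  - cbn [ls_intervals] in Hu. apply in_map_iff in Hu as (p & <- & Hp).
    split; [|apply ls_piece_length_ge].
    apply (within_trans _ (snd p)).
    + apply ls_piece_within; [intros v Hv; apply (IH v Hv) | exact Hp].
    + apply IH, (in_ls_children _ _ _ Hp).
Qed.

Lemma ls_pieces_disjoint n p q :
  ForallPairs (fun u v => u <> v -> disjoint u v) (ls_intervals n) ->
  In p (ls_children n (ls_intervals n)) -> In q (ls_children n (ls_intervals n)) ->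
  p <> q -> disjoint (ls_piece (Datatypes.S n) p) (ls_piece (Datatypes.S n) q).
Proof.
  intros Hdisj Hp Hq Hpq.
  destruct (classic (snd p = snd q)) as [Ea | Na].
  - destruct p as [k a], q as [k' b]; cbn [fst snd] in Ea; subst b.
    assert (Hk : k <> k') by congruence.
    unfold disjoint, ls_piece; cbn [fst snd].
    destruct (proj1 (Nat.lt_gt_cases k k') Hk) as [Hlt | Hlt];
      pose proof (ls_pieces_ordered (Datatypes.S n) _ _ Hlt); [left | right]; lra.
  - assert (Hshort : forall u, In u (ls_intervals n) -> beta ^ (n + 1) <= snd u)
      by (intros u Hu; apply (ls_intervals_bounds n u Hu)).
    apply (disjoint_within (snd p) (snd q)); [|now apply ls_piece_within ..].
    apply Hdisj; [apply (in_ls_children _ _ _ Hp) | apply (in_ls_children _ _ _ Hq) | exact Na].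
Qed.

Lemma ls_intervals_disjoint n :
  NoDup (ls_intervals n) /\ ForallPairs (fun u v => u <> v -> disjoint u v) (ls_intervals n).
Proof.
  induction n as [|n [HND Hdisj]].
  - split; [repeat constructor; easy|]. intros u v [<- | []] [<- | []]. tauto.
  - cbn [ls_intervals]. split.
    + apply NoDup_map_NoDup_ForallPairs; [|exact (ls_children_NoDup n _ HND)].
      intros p q Hp Hq E. apply NNPP. intros Hpq.
      apply (disjoint_irrefl (ls_piece (Datatypes.S n) p)); [apply ls_piece_length_pos|].
      rewrite E at 2. exact (ls_pieces_disjoint n p q Hdisj Hp Hq Hpq).
    + intros u v (p & <- & Hp)%in_map_iff (q & <- & Hq)%in_map_iff Huv.
      apply ls_pieces_disjoint; [exact Hdisj | exact Hp | exact Hq | congruence].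
Qed.

Lemma ls_Lambda_prefix m n :
  (m <= n)%nat -> exists r, ls_Lambda L S beta n = ls_Lambda L S beta m ++ r.
Proof.
  induction 1 as [|n _ [r Hr]]; [exists []; now rewrite app_nil_r|].
  cbn [ls_Lambda]. rewrite Hr, <- app_assoc. eexists; reflexivity.
Qed.

Lemma length_ls_Lambda n : length (ls_Lambda L S beta n) = ls_t L S n.
Proof. now rewrite <- map_fst_ls_intervals, length_map, length_ls_intervals. Qed.

Lemma ls_seq_nth n i :
  (i < ls_t L S n)%nat -> ls_seq L S beta i = fst (nth i (ls_intervals n) (0, 0)).
Proof.
  intros Hi. unfold ls_seq.
  assert (E : nth i (ls_Lambda L S beta i) 0 = nth i (ls_Lambda L S beta n) 0).
  { destruct (Nat.le_ge_cases i n) as [Hin | Hni].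
    - destruct (ls_Lambda_prefix i n Hin) as [r ->]. symmetry. apply app_nth1.
      rewrite length_ls_Lambda. destruct (ls_counts i). lia.
    - destruct (ls_Lambda_prefix n i Hni) as [r ->]. apply app_nth1.
      now rewrite length_ls_Lambda. }
  rewrite E, <- map_fst_ls_intervals, (nth_indep _ 0 (fst ((0, 0) : R * R))).
  - apply map_nth.
  - now rewrite length_map, length_ls_intervals.
Qed.

Lemma ls_seq_separated n i j :
  (i < ls_t L S n)%nat -> (j < ls_t L S n)%nat -> i <> j ->
  beta ^ (n + 1) <= dist_int (ls_seq L S beta i - ls_seq L S beta j).
Proof.
  intros Hi Hj Hij. rewrite (ls_seq_nth n i Hi), (ls_seq_nth n j Hj).
  rewrite <- length_ls_intervals in Hi, Hj.
  set (u := nth i _ _). set (v := nth j _ _).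
  assert (Hu : In u (ls_intervals n)) by (apply nth_In; exact Hi).
  assert (Hv : In v (ls_intervals n)) by (apply nth_In; exact Hj).
  destruct (ls_intervals_disjoint n) as [HND Hdisj].
  assert (Huv : u <> v) by (intros E; exact (Hij (proj1 (NoDup_nth _ _) HND i j Hi Hj E))).
  destruct (ls_intervals_bounds n u Hu), (ls_intervals_bounds n v Hv).
  apply dist_int_disjoint; try assumption.
  - apply pow_lt. lra.
  - exact (Hdisj u v Hu Hv Huv).
Qed.

Lemma ls_window_lt_gap n : beta / 2 / INR (ls_t L S n) < beta ^ (n + 1).
Proof.
  pose proof (ls_t_pow_ge_1 n).
  assert (Ht : 0 < INR (ls_t L S n)) by (apply lt_0_INR; destruct (ls_counts n); lia).
  apply (Rmult_lt_reg_r (INR (ls_t L S n))); [exact Ht|].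
  replace (beta / 2 / INR (ls_t L S n) * INR (ls_t L S n)) with (beta / 2) by (field; lra).
  rewrite pow_add. simpl. nra.
Qed.

End LS.

Theorem corollary1 (L S : nat) (beta : R) :
  (1 <= L)%nat -> (2 <= L + S)%nat ->
  0 < beta < 1 -> INR L * beta + INR S * beta ^ 2 = 1 ->
  ~ poissonian_pair_correlations (ls_seq L S beta).
Proof.
  intros HL HLS Hbeta Hchar.
  apply (not_poissonian_of_F_pc_eq_0 _ (beta / 2)); [lra|].
  intros N0. exists (ls_t L S N0). split.
  - destruct (ls_counts L S HL HLS N0). lia.
  - unfold F_pc. rewrite pair_count_eq_0; [unfold Rdiv; simpl; ring|].
    intros i j Hi Hj Hij.
    apply (Rlt_le_trans _ (beta ^ (N0 + 1))).
    + exact (ls_window_lt_gap L S beta HL HLS Hbeta Hchar N0).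
    + exact (ls_seq_separated L S beta HL HLS Hbeta Hchar N0 i j Hi Hj Hij).
Qed.
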